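(* For every positive integer $k$, $$D_{\mathrm{sub}}[EFX_{id}(2,2k+1)] \;\ge\; D[LS(K(2k+1,k))],$$ where $D_{\mathrm{sub}}[EFX_{id}(2,2k+1)]$ denotes the deterministic value-query complexity of finding an EFX allocation for two players who share one identical valuation, with the valuation ranging only over submodular valuations on the goods $[2k+1]$.
   Context: Goods form a finite set $M$. A valuation is a function $v:2^M\to\mathbb{R}_{\ge 0}$ with $v(\emptyset)=0$ that is monotone: $v(S)\le v(T)$ whenever $S\subseteq T$. It is submodular if $v(S\cup\{x\})-v(S)\ge v(T\cup\{x\})-v(T)$ for all $S\subseteq T$ and $x\notin T$. An allocation to players $1,\dots,n$ is an ordered partition $(A_1,\dots,A_n)$ of $M$; parts may be empty. An allocation is EFX (envy-free up to any good) if for all players $i,j$ and every $g\in A_j$ we have $v_i(A_i)\ge v_i(A_j\setminus\{g\})$. The query problem for EFX is as follows. The algorithm knows $n$ and $M=[m]$, and may adaptively ask value queries: querying a set $S$ returns $v(S)$. It must output an EFX allocation. $D[EFX_{id}(n,m)]$ is the minimum, over deterministic algorithms, of the maximum, over valuations $v$ in the class considered, of the number of queries used. The subscript ''sub'' means the valuation is restricted to submodular valuations. Local Search on a finite undirected graph $G=(V,E)$ is as follows. An unknown function $f:V\to\mathbb{R}$ is accessed only through queries: querying $a\in V$ returns $f(a)$. The algorithm must output a local maximum, i.e. a vertex $a$ with $f(a)\ge f(b)$ for every edge $(a,b)\in E$. $D[LS(G)]$ is the minimum, over deterministic algorithms, of the maximum, over all $f$, of the number of queries used. The Kneser graph $K(n,k)$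 has as vertices the $k$-element subsets of $[n]$, with two vertices adjacent if and only if they are disjoint. *)

From mathcomp Require Import all_boot.
From Stdlib Require Import Reals.
Set Implicit Arguments. Unset Strict Implicit. Unset Printing Implicit Defensive.

(* A deterministic algorithm asking queries of type Q (each answered by a real
   number) and finally outputting an element of O.  Adaptivity: the next step
   may depend arbitrarily on the answer. *)
Inductive qtree (Q O : Type) : Type :=
| QOut : O -> qtree Q O
| QAsk : Q -> (R -> qtree Q O) -> qtree Q O.
Arguments QOut {Q O}.
Arguments QAsk {Q O}.

Fixpoint qrun (Q O : Type) (t : qtree Q O) (ans : Q -> R) : O :=
  match t with
  | QOut o => o
  | QAsk q k => qrun (k (ans q)) ans
  end.

Fixpoint qcost (Q O : Type) (t : qtree Q O) (ans : Q -> R) : nat :=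
  match t with
  | QOut _ => 0
  | QAsk q k => S (qcost (k (ans q)) ans)
  end.

(* "D[problem] <= d": some deterministic algorithm, on every admissible
   oracle ans, outputs a correct answer using at most d queries. *)
Definition solvable_within (Q O : Type) (admissible : (Q -> R) -> Prop)
    (correct : (Q -> R) -> O -> Prop) (d : nat) : Prop :=
  exists t : qtree Q O, forall ans, admissible ans ->
    correct ans (qrun t ans) /\ (qcost t ans <= d)%coq_nat.

Definition valuation (m : nat) (v : {set 'I_m} -> R) : Prop :=
  v set0 = 0%R /\
  (forall S, Rle 0 (v S)) /\
  (forall S T : {set 'I_m}, S \subset T -> Rle (v S) (v T)).

Definition submodular (m : nat) (v : {set 'I_m} -> R) : Prop :=
  forall (S T : {set 'I_m}) (x : 'I_m), S \subset T -> x \notin T ->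
    Rge (Rminus (v (x |: S)) (v S)) (Rminus (v (x |: T)) (v T)).

(* An allocation of goods [m] to players [n] (ordered partition, parts may be
   empty) is encoded by the assignment good |-> player. *)
Definition bundle (n m : nat) (a : {ffun 'I_m -> 'I_n}) (i : 'I_n) : {set 'I_m} :=
  [set g | a g == i].

Definition EFX_id (n m : nat) (v : {set 'I_m} -> R) (a : {ffun 'I_m -> 'I_n}) : Prop :=
  forall (i j : 'I_n) (g : 'I_m), g \in bundle a j ->
    Rge (v (bundle a i)) (v (bundle a j :\ g)).

Definition EFX_id_sub_within (n m d : nat) : Prop :=
  solvable_within (fun v : {set 'I_m} -> R => valuation v /\ submodular v)
    (fun v (a : {ffun 'I_m -> 'I_n}) => EFX_id v a) d.

Definition local_max (V : finType) (e : rel V) (f : V -> R) (a : V) : Prop :=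
  forall b, e a b -> Rge (f a) (f b).

Definition LS_within (V : finType) (e : rel V) (d : nat) : Prop :=
  solvable_within (fun _ : V -> R => True) (fun f a => local_max e f a) d.

Definition kneser_vertex (n k : nat) := {S : {set 'I_n} | #|S| == k}.
Definition kneser_adj (n k : nat) : rel (kneser_vertex n k) :=
  fun A B => [disjoint val A & val B].

(* Encode f : K(2k+1,k) -> R into the identical valuation
   v S = p(|S|) + [|S| = k] * atan (f S), where p is a strictly concave,
   increasing profile whose increments and second differences dominate the
   perturbation.  Then v is monotone and submodular, and a strictly larger
   set is always strictly more valuable, so in an EFX allocation of 2k+1
   goods to two players the bundles have sizes k and k+1.  Every k-set B
   disjoint from the small bundle A is the large bundle minus one good, so
   EFX gives atan (f A) >= atan (f B): A is a local maximum of f.  Value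
   queries of v are answered with at most one query to f, so any EFX
   algorithm becomes a local-search algorithm with no more queries. *)
From mathcomp Require Import all_boot.
From Stdlib Require Import Reals Lra Lia.
From mathcomp Require Import zify.
Set Implicit Arguments. Unset Strict Implicit. Unset Printing Implicit Defensive.

Section QuerySimulation.

Variables (Q Q' O O' : Type).
Variables (ask : Q -> option Q') (reply : Q -> option R -> R) (out : O -> O').

Definition simulated_oracle (ans' : Q' -> R) (q : Q) : R := reply q (omap ans' (ask q)).

Fixpoint simulate (t : qtree Q O) : qtree Q' O' :=
  match t with
  | QOut o => QOut (out o)
  | QAsk q c =>
      if ask q is Some q' then QAsk q' (fun r => simulate (c (reply q (Some r))))
      else simulate (c (reply q None))
  end.

Lemma qrun_simulate t ans' : qrun (simulate t) ans' = out (qrun t (simulated_oracle ans')).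
Proof.
elim: t => [o|q c IH] //=; rewrite /simulated_oracle.
by case: (ask q) => [q'|] /=; rewrite IH.
Qed.

Lemma qcost_simulate t ans' :
  (qcost (simulate t) ans' <= qcost t (simulated_oracle ans'))%coq_nat.
Proof.
elim: t => [o|q c IH] /=; first exact: le_n.
rewrite /simulated_oracle; case: (ask q) => [q'|] /=.
- exact/le_n_S/IH.
- exact/le_S/IH.
Qed.

Lemma solvable_within_simulate (adm : (Q -> R) -> Prop) (correct : (Q -> R) -> O -> Prop)
    (adm' : (Q' -> R) -> Prop) (correct' : (Q' -> R) -> O' -> Prop) d :
  (forall ans', adm' ans' -> adm (simulated_oracle ans')) ->
  (forall ans' o, adm' ans' -> correct (simulated_oracle ans') o -> correct' ans' (out o)) ->
  solvable_within adm correct d -> solvable_within adm' correct' d.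
Proof.
move=> adm_sim correct_sim [t Ht]; exists (simulate t) => ans' adm_ans'.
have [ok cost] := Ht _ (adm_sim _ adm_ans').
split; first by rewrite qrun_simulate; exact: correct_sim.
exact: Nat.le_trans (qcost_simulate t ans') cost.
Qed.

End QuerySimulation.

Section ProfileValuation.

Variables (m : nat) (p : nat -> R) (e : {set 'I_m} -> R) (c : R).

Definition profile_valuation (S : {set 'I_m}) : R := (p #|S| + e S)%R.

Hypothesis e_bound : forall S, (- c < e S < c)%R.
Hypothesis p_step : forall s, (s < m)%N -> (p s + 2 * c <= p s.+1)%R.

Lemma card_set_ord_le (S : {set 'I_m}) : (#|S| <= m)%N.
Proof. by rewrite -[X in (_ <= X)%N]card_ord max_card. Qed.

Lemma profile_lt s t : (s < t)%N -> (t <= m)%N -> (p s + 2 * c <= p t)%R.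
Proof.
have c_pos : (0 < c)%R by have := e_bound set0; lra.
elim: t => // t IH; rewrite ltnS leq_eqVlt => /orP [/eqP <-|st] tm.
  exact: p_step.
have := IH st (ltnW tm); have := p_step tm; lra.
Qed.

Lemma profile_valuation_lt (S T : {set 'I_m}) :
  (#|S| < #|T|)%N -> (profile_valuation S < profile_valuation T)%R.
Proof.
move=> ST; have := profile_lt ST (card_set_ord_le T).
have := e_bound S; have := e_bound T; rewrite /profile_valuation; lra.
Qed.

Hypothesis p0 : p 0 = 0%R.
Hypothesis e0 : e set0 = 0%R.

Lemma profile_valuation_valuation : valuation profile_valuation.
Proof.
have v0 : profile_valuation set0 = 0%R by rewrite /profile_valuation cards0 p0 e0 Rplus_0_r.
split; [done | split].
- move=> S; have [->|neS] := eqVneq S set0; first by rewrite v0; apply: Rle_refl.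
  rewrite -v0; apply/Rlt_le/profile_valuation_lt.
  by rewrite cards0 card_gt0.
- move=> S T ST; have [->|neST] := eqVneq S T; first exact: Rle_refl.
  by apply/Rlt_le/profile_valuation_lt/proper_card; rewrite properEneq neST.
Qed.

Hypothesis p_concave : forall s t, (s < t)%N -> (t < m)%N ->
  (p t.+1 - p t + 4 * c <= p s.+1 - p s)%R.

Lemma profile_valuation_submodular : submodular profile_valuation.
Proof.
move=> S T x ST xT; have [->|neST] := eqVneq S T; first by apply: Rge_refl.
have xS : x \notin S by apply: contra xT; apply: (subsetP ST).
have cxS : #|x |: S| = #|S|.+1 by rewrite cardsU1 xS.
have cxT : #|x |: T| = #|T|.+1 by rewrite cardsU1 xT.
have Tm : (#|T| < m)%N by rewrite -cxT card_set_ord_le.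
have ST_card : (#|S| < #|T|)%N by apply: proper_card; rewrite properEneq neST.
have := p_concave ST_card Tm.
have := e_bound S; have := e_bound T; have := e_bound (x |: S); have := e_bound (x |: T).
by rewrite /profile_valuation cxS cxT; lra.
Qed.

End ProfileValuation.

Lemma efx_card_bundle_le n m (v : {set 'I_m} -> R) (a : {ffun 'I_m -> 'I_n}) (i j : 'I_n) :
  (forall S T : {set 'I_m}, (#|S| < #|T|)%N -> (v S < v T)%R) ->
  EFX_id v a -> (#|bundle a j| <= #|bundle a i|.+1)%N.
Proof.
move=> v_card_lt efx; rewrite leqNgt; apply/negP => ji.
have /card_gt0P [g gj] : (0 < #|bundle a j|)%N by apply: leq_ltn_trans ji.
have := efx i j g gj; apply/Rlt_not_ge/v_card_lt.
by move: ji; rewrite (cardsD1 g (bundle a j)) gj.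
Qed.

Lemma bundle_compl m (a : {ffun 'I_m -> 'I_2}) (i j : 'I_2) :
  i != j -> bundle a j = ~: bundle a i.
Proof.
move=> ij; apply/setP => g; rewrite !inE; move: (a g) ij.
by case=> [[|[|?]] ?]; case: i => [[|[|?]] ?]; case: j => [[|[|?]] ?].
Qed.

Lemma subset_setD1_eq (T : finType) (B C : {set T}) :
  B \subset C -> #|C| = #|B|.+1 -> exists2 g, g \in C & C :\ g = B.
Proof.
move=> BC cC.
have /card_gt0P [g] : (0 < #|C :\: B|)%N by rewrite cardsD (setIidPr BC) cC subSnn.
rewrite inE => /andP [gB gC]; exists g => //.
have cCg : #|C :\ g| = #|B| by move: cC; rewrite (cardsD1 g C) gC add1n => -[].
apply/eqP; rewrite eq_sym eqEcard cCg leqnn andbT.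
by apply/subsetP => x xB; rewrite !inE (subsetP BC x xB) andbT; apply: contraNneq gB => <-.
Qed.

Lemma kneser_vertex_inhabited n k : (k <= n)%N -> inhabited (kneser_vertex n k).
Proof.
move=> kn; have widen_inj : injective (widen_ord kn) by move=> x y /(congr1 val) /= /val_inj.
constructor; apply: (@exist _ _ [set widen_ord kn i | i : 'I_k]).
by rewrite card_imset // card_ord.
Qed.

Section KneserEncoding.

Variable k : nat.
Hypothesis k_gt0 : (0 < k)%N.

Local Notation m := (2 * k + 1)%N.
Local Notation vertex := (kneser_vertex m k).

(* Its increments 8 (2k + 2 - j) are at least 16 > pi on [0, 2k] and drop by
   8 > 2 pi at each step, which absorbs a perturbation bounded by pi / 2. *)
Definition kneser_profile (j : nat) : R := (4 * INR j * (4 * INR k + 5 - INR j))%R.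

Definition kneser_reply (S : {set 'I_m}) (r : option R) : R :=
  (kneser_profile #|S| + oapp atan 0 r)%R.

Definition kneser_perturbation (f : vertex -> R) (S : {set 'I_m}) : R :=
  oapp atan 0%R (omap f (insub S)).

Lemma INR_le_double (s : nat) : (s < m)%N -> (INR s <= 2 * INR k)%R.
Proof. by move=> sm; rewrite -[2%R]/(INR 2) -mult_INR; apply: le_INR; lia. Qed.

Lemma kneser_profile_step s :
  (s < m)%N -> (kneser_profile s + 2 * (PI / 2) <= kneser_profile s.+1)%R.
Proof.
move=> /INR_le_double sk; rewrite /kneser_profile S_INR; have := PI_4; nra.
Qed.

Lemma kneser_profile_concave s t : (s < t)%N -> (t < m)%N ->
  (kneser_profile t.+1 - kneser_profile t + 4 * (PI / 2) <=
   kneser_profile s.+1 - kneser_profile s)%R.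
Proof.
move=> st _; have : (INR s + 1 <= INR t)%R by rewrite -S_INR; apply: le_INR; lia.
rewrite /kneser_profile !S_INR; have := PI_4; lra.
Qed.

Lemma kneser_perturbation_bound f S : (- (PI / 2) < kneser_perturbation f S < PI / 2)%R.
Proof.
rewrite /kneser_perturbation; case: insub => [B|] /=.
- by have := atan_bound (f B); lra.
- by have := PI_RGT_0; lra.
Qed.

Lemma kneser_perturbation_set0 f : kneser_perturbation f set0 = 0%R.
Proof. by rewrite /kneser_perturbation insubF // cards0 eq_sym eqn0Ngt k_gt0. Qed.

Definition kneser_valuation (f : vertex -> R) : {set 'I_m} -> R :=
  profile_valuation kneser_profile (kneser_perturbation f).

Lemma kneser_valuation_card_lt f (S T : {set 'I_m}) :
  (#|S| < #|T|)%N -> (kneser_valuation f S < kneser_valuation f T)%R.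
Proof.
apply: profile_valuation_lt; [exact: kneser_perturbation_bound | exact: kneser_profile_step].
Qed.

Lemma submodular_valuation_kneser f :
  valuation (kneser_valuation f) /\ submodular (kneser_valuation f).
Proof.
split.
- apply: profile_valuation_valuation; [exact: kneser_perturbation_bound |
    exact: kneser_profile_step | by rewrite /kneser_profile Rmult_0_r Rmult_0_l |
    exact: kneser_perturbation_set0].
- apply: profile_valuation_submodular;
    [exact: kneser_perturbation_bound | exact: kneser_profile_concave].
Qed.

Lemma simulated_kneser_valuation f :
  simulated_oracle insub kneser_reply f = kneser_valuation f.
Proof. reflexivity. Qed.

Lemma kneser_valuation_vertex f (B : vertex) :
  kneser_valuation f (val B) = (kneser_profile k + atan (f B))%R.
Proof. by rewrite /kneser_valuation /profile_valuation /kneser_perturbation valK (eqP (valP B)). Qed.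

Lemma efx_kneser_bundle_card f (a : {ffun 'I_m -> 'I_2}) :
  EFX_id (kneser_valuation f) a -> #|bundle a ord0| = k \/ #|bundle a ord_max| = k.
Proof.
move=> efx; have ij : (ord0 : 'I_2) != ord_max by [].
have sum : (#|bundle a ord0| + #|bundle a ord_max| = m)%N.
  by rewrite (bundle_compl a ij) cardsC card_ord.
have := efx_card_bundle_le ord0 ord_max (kneser_valuation_card_lt f) efx.
have := efx_card_bundle_le ord_max ord0 (kneser_valuation_card_lt f) efx.
lia.
Qed.

Lemma efx_kneser_local_max f (a : {ffun 'I_m -> 'I_2}) (i j : 'I_2) (A : vertex) :
  EFX_id (kneser_valuation f) a -> i != j -> val A = bundle a i ->
  local_max (@kneser_adj m k) f A.
Proof.
move=> efx ij Ai B; rewrite /kneser_adj Ai => disAB.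
have cB : #|val B| = k by apply/eqP; exact: (valP B).
have cA : #|bundle a i| = k by rewrite -Ai; apply/eqP; exact: (valP A).
have Bj : val B \subset bundle a j by rewrite (bundle_compl a ij) -disjoints_subset disjoint_sym.
have cj : #|bundle a j| = #|val B|.+1.
  by move: (cardsC (bundle a i)); rewrite -(bundle_compl a ij) card_ord cA cB; lia.
have [g gj Eg] := subset_setD1_eq Bj cj.
have := efx i j g gj; rewrite Eg -Ai !kneser_valuation_vertex => fAB.
by apply: Rnot_lt_ge => /atan_increasing; lra.
Qed.

Variable v0 : vertex.

Definition kneser_output (a : {ffun 'I_m -> 'I_2}) : vertex :=
  if insub (bundle a ord0) is Some A then A else odflt v0 (insub (bundle a ord_max)).

Lemma kneser_output_local_max f (a : {ffun 'I_m -> 'I_2}) :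
  EFX_id (kneser_valuation f) a -> local_max (@kneser_adj m k) f (kneser_output a).
Proof.
move=> efx; rewrite /kneser_output.
case: insubP => [A _ A0|c0]; first exact: (efx_kneser_local_max (j := ord_max)) efx _ A0.
have [c0'|cmax] := efx_kneser_bundle_card efx; first by rewrite c0' eqxx in c0.
case: insubP => [A _ Amax|]; first exact: (efx_kneser_local_max (j := ord0)) efx _ Amax.
by rewrite cmax eqxx.
Qed.

End KneserEncoding.

Theorem theorem3p1 (k : nat) : (0 < k)%N ->
  forall d : nat, EFX_id_sub_within 2 (2 * k + 1) d ->
    LS_within (@kneser_adj (2 * k + 1) k) d.
Proof.
move=> k_gt0 d; rewrite /EFX_id_sub_within /LS_within.
have [v0] : inhabited (kneser_vertex (2 * k + 1) k) by apply: kneser_vertex_inhabited; lia.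
apply: (solvable_within_simulate (ask := insub) (reply := @kneser_reply k)
          (out := kneser_output v0)).
- by move=> f _; rewrite simulated_kneser_valuation; exact: submodular_valuation_kneser.
- by move=> f a _; rewrite simulated_kneser_valuation; exact: kneser_output_local_max.
Qed.
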